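(* Let $(X,\kappa)$ be a finite digital image which is strongly contractible, i.e. $\mathrm{id}_X$ is strongly homotopic to a constant map. Then every continuous map $f:X\to X$ has a fixed point or at least two approximate fixed points.
   Context: A digital image is a pair $(X,\kappa)$ where $X$ is a set and $\kappa$ is a symmetric irreflexive relation on $X$ (the adjacency). Write $x\leftrightarrow y$ if adjacent, $x\Leftrightarrow y$ if adjacent or equal. A map $f$ is continuous if $x\leftrightarrow y$ implies $f(x)\Leftrightarrow f(y)$. A point $x$ is an approximate fixed point of $f:X\to X$ if $f(x)\Leftrightarrow x$. The digital interval $[0,m]_{\mathbb Z}$ has consecutive integers adjacent. Continuous $f,g:X\to Y$ are strongly homotopic ($f\simeq^* g$) if there exist $m\ge1$ and $H:X\times[0,m]_{\mathbb Z}\to Y$ with $H(\cdot,0)=f$, $H(\cdot,m)=g$, such that whenever $(x,t)\neq(x',t')$, $x\Leftrightarrow x'$ and $|t-t'|\le1$, we have $H(x,t)\Leftrightarrow H(x',t')$. *)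

(* A finite digital image is (X, kappa) with X : finType and
   kappa : rel X symmetric and irreflexive. *)
From mathcomp Require Import all_boot.
Set Implicit Arguments. Unset Strict Implicit. Unset Printing Implicit Defensive.

Definition adjacency (X : Type) (k : rel X) : Prop :=
  (forall x y, k x y -> k y x) /\ (forall x, ~~ k x x).

Definition adj_or_eq (X : eqType) (k : rel X) (x y : X) : bool :=
  (x == y) || k x y.

Definition dcontinuous (X Y : eqType) (kX : rel X) (kY : rel Y) (f : X -> Y) : Prop :=
  forall x y, kX x y -> adj_or_eq kY (f x) (f y).

Definition approx_fixed (X : eqType) (k : rel X) (f : X -> X) (x : X) : Prop :=
  adj_or_eq k (f x) x.

(* strong homotopy, with time ranging over the digital interval [0,m]_Z,
   modelled as naturals t <= m (values of H at t > m are irrelevant). *)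
Definition strongly_homotopic (X Y : eqType) (kX : rel X) (kY : rel Y)
    (f g : X -> Y) : Prop :=
  dcontinuous kX kY f /\ dcontinuous kX kY g /\
  exists (m : nat) (H : X -> nat -> Y),
    1 <= m /\
    (forall x, H x 0 = f x) /\ (forall x, H x m = g x) /\
    (forall x x' t t', t <= m -> t' <= m ->
       (x, t) <> (x', t') -> adj_or_eq kX x x' ->
       (t <= t'.+1) -> (t' <= t.+1) ->
       adj_or_eq kY (H x t) (H x' t')).

Definition strongly_contractible (X : eqType) (k : rel X) : Prop :=
  exists c : X, strongly_homotopic k k id (fun _ => c).

From mathcomp Require Import all_boot.
From mathcomp Require Import zify.

(* Let H be a strong homotopy from id_X to the constant map c,
   with H x 0 = x and H x m = c, and let f be continuous.  Following the
   homotopy backwards in time while feeding its output through f, we build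
   the chain
       b 0 = c,      b (s+1) = H (f (b s)) (m - (s+1)).
   Consecutive points are adjacent or equal: b 0 = H (f c) m and b 1 differ
   only by one time step, and for s > 0 the continuity of f and the strong
   homotopy condition propagate the relation from b (s-1) ~ b s to
   b s ~ b (s+1).  At the end b m = H (f (b (m-1))) 0 = f (b (m-1)), so
   y := b (m-1) is an approximate fixed point of f.  Finally a purely local
   argument finishes: if f y <> y then f y is a second approximate fixed
   point, since f y ~ y gives f (f y) ~ f y by continuity. *)

Set Implicit Arguments.
Unset Strict Implicit.
Unset Printing Implicit Defensive.

Section ApproximateFixedPoints.

Variables (X : eqType) (k : rel X).
Hypothesis k_sym : forall x y, k x y -> k y x.

Lemma adj_or_eq_sym (x y : X) : adj_or_eq k x y -> adj_or_eq k y x.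
Proof.
by rewrite /adj_or_eq eq_sym => /orP [-> // | /k_sym ->]; rewrite orbT.
Qed.

Lemma dcontinuous_adj_or_eq (f : X -> X) (x y : X) :
  dcontinuous k k f -> adj_or_eq k x y -> adj_or_eq k (f x) (f y).
Proof.
move=> fc /orP [/eqP -> | kxy]; last exact: fc.
by rewrite /adj_or_eq eqxx.
Qed.

Lemma approx_fixed_dichotomy (f : X -> X) (y : X) :
  dcontinuous k k f -> approx_fixed k f y ->
  (exists x, f x = x) \/
  (exists x z, x <> z /\ approx_fixed k f x /\ approx_fixed k f z).
Proof.
move=> fc fy_y; have [fixed | moved] := eqVneq (f y) y; first by left; exists y.
right; exists y, (f y); split; first by move=> eq_y; rewrite -eq_y eqxx in moved.
split=> //; apply: fc.
by case/orP: fy_y => [/eqP eq_fy | //]; rewrite eq_fy eqxx in moved.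
Qed.

Section ContractionChain.

Variables (c : X) (m : nat) (H : X -> nat -> X).
Hypothesis m_pos : 0 < m.
Hypothesis H_start : forall x, H x 0 = x.
Hypothesis H_end : forall x, H x m = c.
Hypothesis H_strong : forall x x' t t', t <= m -> t' <= m ->
  (x, t) <> (x', t') -> adj_or_eq k x x' ->
  t <= t'.+1 -> t' <= t.+1 -> adj_or_eq k (H x t) (H x' t').

Variables (f : X -> X).
Hypothesis f_cont : dcontinuous k k f.

Fixpoint chain (s : nat) : X :=
  if s is s'.+1 then H (f (chain s')) (m - s'.+1) else c.

(* Consecutive points of the chain are adjacent or equal: chain 0 = H (f c) m
   and chain 1 differ by one time step at the same point, and afterwards the
   relation is carried from one step to the next by continuity of f. *)
Lemma chain_step (s : nat) : s < m -> adj_or_eq k (chain s) (chain s.+1).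
Proof.
elim: s => [|s IH] lt_s_m /=.
  rewrite -{1}(H_end (f c)); apply: H_strong; try lia.
    by case; lia.
  by rewrite /adj_or_eq eqxx.
apply: H_strong; try lia; first by case=> _; lia.
by apply: dcontinuous_adj_or_eq => //; apply: IH; lia.
Qed.

Lemma chain_approx_fixed : approx_fixed k f (chain m.-1).
Proof.
have last_step : adj_or_eq k (chain m.-1) (chain m.-1.+1).
  by apply: chain_step; rewrite ltn_predL.
rewrite /= prednK // subnn H_start in last_step.
exact: adj_or_eq_sym.
Qed.

End ContractionChain.

Lemma contractible_approx_fixed (f : X -> X) :
  strongly_contractible k -> dcontinuous k k f -> exists x, approx_fixed k f x.
Proof.
move=> [c [_ [_ [m [H [m_pos [H_start [H_end H_strong]]]]]]]] f_cont.
exists (chain c m H f m.-1); exact: chain_approx_fixed.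
Qed.

End ApproximateFixedPoints.

Theorem theorem3p7 (X : finType) (k : rel X) :
  adjacency k -> strongly_contractible k ->
  forall f : X -> X, dcontinuous k k f ->
    (exists x, f x = x) \/
    (exists x y, x <> y /\ approx_fixed k f x /\ approx_fixed k f y).
Proof.
move=> [k_sym _] contractible f f_cont.
have [y fy_y] := contractible_approx_fixed k_sym contractible f_cont.
exact: approx_fixed_dichotomy f_cont fy_y.
Qed.
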